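(* Let $\mathcal{H}=(V,E)$ be a hypergraph with $\emptyset\notin E$. Then $\mathcal{H}$ is threshold if and only if its split-incidence graph is connected-domishold.
   Context: A hypergraph $\mathcal{H}=(V,E)$ consists of a finite set $V$ and a set $E$ of subsets of $V$ (hyperedges). It is threshold if there exist $w:V\to\mathbb{R}_{\ge0}$ and $t\in\mathbb{R}_{\ge0}$ such that for all $X\subseteq V$, $\sum_{x\in X}w(x)\le t$ iff $X$ contains no hyperedge. The split-incidence graph of $\mathcal{H}$ is the graph with vertex set $V\cup E$ in which $V$ is a clique, $E$ is an independent set, and $v\in V$ is adjacent to $e\in E$ iff $v\in e$. A connected dominating set of a connected graph $G$ is a set $S\subseteq V(G)$ such that every vertex not in $S$ has a neighbor in $S$ and $G[S]$ is connected; $G$ is connected-domishold if there exist $w:V(G)\to\mathbb{R}_{\ge0}$, $t\in\mathbb{R}_{\ge0}$ such that for all $S\subseteq V(G)$, $\sum_{x\in S}w(x)\ge t$ iff $S$ is a connected dominating set. *)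

From HB Require Import structures.
From mathcomp Require Import all_boot.
From Stdlib Require Import Reals.
Set Implicit Arguments. Unset Strict Implicit. Unset Printing Implicit Defensive.

Open Scope R_scope.

Lemma Rplus_assoc' : associative Rplus.
Proof. by move=> a b c; rewrite Rplus_assoc. Qed.
HB.instance Definition _ := Monoid.isComLaw.Build R R0 Rplus
  Rplus_assoc' Rplus_comm Rplus_0_l.

Definition wsum (T : finType) (w : T -> R) (X : {set T}) : R :=
  \big[Rplus/R0]_(x in X) w x.

Definition contains_edge (V : finType) (E : {set {set V}}) (X : {set V}) : bool :=
  [exists e in E, e \subset X].

Definition threshold_hypergraph (V : finType) (E : {set {set V}}) : Prop :=
  exists (w : V -> R) (t : R),
    (forall x, 0 <= w x) /\ 0 <= t /\
    forall X : {set V}, wsum w X <= t <-> ~~ contains_edge E X.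

Definition dominating (T : finType) (adj : rel T) (S : {set T}) : bool :=
  [forall x, (x \notin S) ==> [exists y in S, adj x y]].

Definition induced_connected (T : finType) (adj : rel T) (S : {set T}) : bool :=
  [forall x in S, forall y in S,
     connect (fun a b => [&& a \in S, b \in S & adj a b]) x y].

Definition connected_dominating (T : finType) (adj : rel T) (S : {set T}) : bool :=
  dominating adj S && induced_connected adj S.

Definition connected_domishold (T : finType) (adj : rel T) : Prop :=
  exists (w : T -> R) (t : R),
    (forall x, 0 <= w x) /\ 0 <= t /\
    forall S : {set T}, t <= wsum w S <-> connected_dominating adj S.

Definition si_vertex (V : finType) (E : {set {set V}}) : finType :=
  (V + {e : {set V} | e \in E})%type.

Definition si_adj (V : finType) (E : {set {set V}}) : rel (si_vertex E) :=
  fun a b =>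
    match a, b with
    | inl u, inl v => u != v
    | inl v, inr e => v \in sval e
    | inr e, inl v => v \in sval e
    | inr _, inr _ => false
    end.

From mathcomp Require Import all_boot.
From Stdlib Require Import Reals Lra.
Set Implicit Arguments. Unset Strict Implicit. Unset Printing Implicit Defensive.

(* Both properties are statements about transversals (sets meeting every
   hyperedge).  A set X contains no hyperedge iff its complement is a
   transversal, so H is threshold iff the transversals are exactly the sets of
   weight at least some t.  In the split-incidence graph, a set S meeting the
   clique V is a connected dominating set iff S ∩ V is a transversal: every
   hyperedge-vertex must see S ∩ V, either to be dominated or to be joined to
   the clique inside S.  If some hyperedge misses a vertex, every connected
   dominating set meets V, so giving hyperedge-vertices weight 0 transfers the
   threshold; otherwise (all hyperedges equal V) the connected dominating sets
   are exactly the nonempty sets. *)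

Lemma wsum_ge0 (T : finType) (w : T -> R) (X : {set T}) :
  (forall x, 0 <= w x) -> 0 <= wsum w X.
Proof.
move=> w_ge0; apply: (big_ind (fun s => 0 <= s)) => [|a b|x _]; [lra|lra|].
exact: w_ge0.
Qed.

Lemma wsum_setT (T : finType) (w : T -> R) (X : {set T}) :
  wsum w setT = wsum w X + wsum w (~: X).
Proof. by rewrite /wsum (big_setID X) setTI setTD. Qed.

Lemma wsum_set0 (T : finType) (w : T -> R) : wsum w set0 = 0.
Proof. exact: big_set0. Qed.

Section SumWeights.
Variables (A B : finType) (w : (A + B)%type -> R).

Lemma wsum_inl (X : {set A}) : wsum w (inl @: X) = wsum (w \o inl) X.
Proof. by rewrite /wsum big_imset //= => a b _ _ [->]. Qed.

Lemma wsum_inl_part (S : {set A + B}) : (forall b, w (inr b) = 0) ->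
  wsum w S = wsum (w \o inl) [set a | inl a \in S].
Proof.
move=> w_inr0; rewrite /wsum big_sumType /= [X in _ + X]big1 => [|b _].
  by rewrite Rplus_0_r; apply: eq_bigl => a; rewrite inE.
exact: w_inr0.
Qed.

End SumWeights.

Section Transversals.
Variables (V : finType) (E : {set {set V}}).

Definition transversal (A : {set V}) : bool := [forall e in E, ~~ [disjoint e & A]].

Lemma transversalP (A : {set V}) :
  reflect (forall e, e \in E -> exists2 v, v \in e & v \in A) (transversal A).
Proof.
apply: (iffP forall_inP) => [hit e eE | hit e eE].
  have := hit e eE; rewrite -setI_eq0 => /set0Pn[v].
  by rewrite inE => /andP[]; exists v.
have [v ve vA] := hit e eE; rewrite -setI_eq0; apply/set0Pn.
by exists v; rewrite inE ve.
Qed.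

Lemma transversalC (X : {set V}) : transversal (~: X) = ~~ contains_edge E X.
Proof.
rewrite /contains_edge negb_exists_in; apply: eq_forallb_in => e _.
by rewrite disjoints_subset setCK.
Qed.

Lemma transversal_set0 : E != set0 -> ~~ transversal set0.
Proof.
case/set0Pn=> e eE; apply/transversalP => /(_ e eE)[v _].
by rewrite inE.
Qed.

Lemma threshold_transversal : set0 \notin E ->
  threshold_hypergraph E <->
  exists (w : V -> R) (t : R),
    (forall v, 0 <= w v) /\ forall A, t <= wsum w A <-> transversal A.
Proof.
move=> E_nonempty_edges; split=> [[w [t [w_ge0 [_ Hw]]]] | [w [t [w_ge0 Hw]]]].
  exists w, (wsum w setT - t); split=> // A.
  rewrite -[A]setCK transversalC -Hw (wsum_setT w (~: A)) setCK; lra.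
have setT_transversal : transversal setT.
  apply/transversalP => e eE; have /set0Pn[v ve] : e != set0.
    by apply: contraNneq E_nonempty_edges => <-.
  by exists v; rewrite ?inE.
have /Hw t_le_wT := setT_transversal.
exists w, (wsum w setT - t); split=> //; split=> [|X]; first lra.
by rewrite -transversalC -Hw (wsum_setT w X); lra.
Qed.

End Transversals.

Section Graphs.
Variables (T : finType) (adj : rel T).

Definition induced_rel (S : {set T}) : rel T :=
  fun a b => [&& a \in S, b \in S & adj a b].

Lemma induced_connectedP (S : {set T}) :
  reflect (forall x y, x \in S -> y \in S -> connect (induced_rel S) x y)
          (induced_connected adj S).
Proof.
apply: (iffP forall_inP) => [conn x y xS yS | conn x xS].
  exact: (forall_inP (conn x xS)).
by apply/forall_inP => y yS; apply: conn.
Qed.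

Lemma dominatingP (S : {set T}) :
  reflect (forall x, x \notin S -> exists2 y, y \in S & adj x y) (dominating adj S).
Proof.
apply: (iffP forallP) => [dom x xS | dom x]; last first.
  by apply/implyP => /dom[y yS xy]; apply/exists_inP; exists y.
by have /implyP/(_ xS)/exists_inP[y] := dom x; exists y.
Qed.

Lemma dominating_set0 (x : T) : ~~ dominating adj set0.
Proof. by apply/dominatingP => /(_ x); rewrite inE => /(_ isT)[y]; rewrite inE. Qed.

Lemma connected_dominating_nbr (S : {set T}) a x :
  connected_dominating adj S -> x \in S -> a != x -> exists2 y, y \in S & adj a y.
Proof.
case/andP=> /dominatingP dom /induced_connectedP conn xS a_neq_x.
have [aS | /dom //] := boolP (a \in S).
case/connectP: (conn a x aS xS) => [[|y p]] /=.
  by move=> _ xa; rewrite xa eqxx in a_neq_x.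
by case/andP=> /and3P[_ yS ay] _ _; exists y.
Qed.

Lemma induced_connected_hub (S : {set T}) a : symmetric adj -> a \in S ->
  (forall x, x \in S -> connect (induced_rel S) x a) -> induced_connected adj S.
Proof.
move=> adjC aS to_a; apply/induced_connectedP => x y xS yS.
have symS : connect_sym (induced_rel S).
  by apply: sym_connect_sym => b c; rewrite /induced_rel adjC andbCA.
by apply: connect_trans (to_a x xS) _; rewrite symS; apply: to_a.
Qed.

Lemma connected_domishold_nonempty :
  (forall S : {set T}, S != set0 -> connected_dominating adj S) ->
  connected_domishold adj.
Proof.
move=> cds_nonempty; have [x0 _ | T_empty] := pickP (fun _ : T => true).
  exists (fun _ => 1), 1; split=> [_|]; first lra; split=> [|S]; first lra.
  have [-> | /set0Pn[x xS]] := eqVneq S set0.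
    rewrite wsum_set0 /connected_dominating (negbTE (dominating_set0 x0)).
    split=> [|//]; lra.
  split=> [_|_]; first by apply: cds_nonempty; apply/set0Pn; exists x.
  have := @wsum_ge0 _ (fun _ => 1) (S :\ x) (fun _ => Rle_0_1).
  rewrite /wsum (big_setD1 x xS) /=; lra.
exists (fun _ => 0), 0; split=> [_|]; first lra; split=> [|S]; first lra.
split=> _; last by apply: wsum_ge0 => _; lra.
by apply/andP; split; [apply/dominatingP | apply/induced_connectedP] => x;
  have := T_empty x.
Qed.

End Graphs.

Section SplitIncidence.
Variables (V : finType) (E : {set {set V}}).
Local Notation T := (si_vertex E).
Local Notation adj := (@si_adj V E).

Definition vpart (S : {set T}) : {set V} := [set v | inl v \in S].

Lemma si_adjC : symmetric adj.
Proof. by case=> [u|e] [v|f] //=; rewrite eq_sym. Qed.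

Lemma vpart_inl (A : {set V}) : vpart (inl @: A) = A.
Proof. by apply/setP => v; rewrite inE (mem_imset _ _ (@inl_inj _ _)). Qed.

Lemma vpart_eq0 (S : {set T}) : vpart S = set0 -> forall v, (inl v \in S) = false.
Proof. by move=> A0 v; rewrite -(in_set0 v) -A0 inE. Qed.

Lemma si_cds_vpart (S : {set T}) :
  vpart S != set0 -> connected_dominating adj S = transversal E (vpart S).
Proof.
case/set0Pn=> a; rewrite inE => aS; apply/idP/transversalP => [cds e eE | hit].
  have [[v|f] vS ev] := connected_dominating_nbr (a := inr (exist _ e eE)) cds aS isT.
    by exists v; [exact: ev | rewrite inE].
  by [].
have to_a v : inl v \in S -> connect (induced_rel adj S) (inl v) (inl a).
  move=> vS; have [-> | va] := eqVneq v a; first exact: connect0.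
  by apply: connect1; rewrite /induced_rel vS aS /=.
apply/andP; split.
  apply/dominatingP => -[v | [e eE]] xS.
    by exists (inl a) => //=; apply: contraNneq xS => ->.
  by have [v ve vS] := hit e eE; exists (inl v); rewrite ?inE in vS.
apply: (induced_connected_hub si_adjC aS) => -[v | [e eE]] xS; first exact: to_a.
have [v ve vS] := hit e eE; rewrite inE in vS.
by apply: connect_trans (to_a v vS); apply: connect1; rewrite /induced_rel xS vS.
Qed.

Lemma si_cds_inl (A : {set V}) :
  E != set0 -> connected_dominating adj (inl @: A) = transversal E A.
Proof.
move=> E_neq0; have [-> | A_neq0] := eqVneq A set0; last first.
  by rewrite si_cds_vpart vpart_inl.
have [e eE] := set0Pn _ E_neq0.
rewrite imset0 (negbTE (transversal_set0 E_neq0)) /connected_dominating.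
by rewrite (negbTE (dominating_set0 adj (inr (exist _ e eE) : T))).
Qed.

Lemma si_cds_proper (S : {set T}) e1 v1 : e1 \in E -> v1 \notin e1 ->
  connected_dominating adj S = transversal E (vpart S).
Proof.
move=> e1E v1e1; have [A0 | ] := eqVneq (vpart S) set0; last exact: si_cds_vpart.
rewrite A0 (negbTE (transversal_set0 _)); last by apply/set0Pn; exists e1.
apply/negP => cds; have notinl := vpart_eq0 A0.
have /andP[/dominatingP dom _] := cds.
have [[v|f] fS v1f] := dom _ (negbT (notinl v1)).
  by rewrite notinl in fS.
have e1_neq_f : inr (exist _ e1 e1E) != inr f :> T.
  by apply: contraNneq v1e1 => -[f_eq]; move: v1f; rewrite -f_eq.
have [[u|g] uS //] := connected_dominating_nbr cds fS e1_neq_f.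
by rewrite notinl in uS.
Qed.

(* A set avoiding V then consists of the single hyperedge-vertex, which is
   adjacent to all of V. *)
Lemma si_cds_trivial (S : {set T}) :
  E \subset [set setT] -> S != set0 -> connected_dominating adj S.
Proof.
move=> /subsetP E_triv; have eT e : e \in E -> e = setT.
  by move/E_triv; rewrite inE => /eqP.
have [A_neq0 _ | A0] := boolP (vpart S != set0).
  rewrite si_cds_vpart //; apply/transversalP => e eE.
  by have [a aS] := set0Pn _ A_neq0; exists a; rewrite // (eT e eE) inE.
move/negbNE/eqP: A0 => /vpart_eq0 notinl /set0Pn[[v | f] fS].
  by rewrite notinl in fS.
have inr_uniq g : inr g = inr f :> T.
  by congr inr; apply: val_inj; rewrite /= (eT _ (valP g)) (eT _ (valP f)).
have S_f x : x \in S -> x = inr f by case: x => [u|g]; rewrite ?notinl ?inr_uniq.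
apply/andP; split.
  apply/dominatingP => -[u | g] xS; last by rewrite inr_uniq fS in xS.
  by exists (inr f) => //=; rewrite (eT _ (valP f)) inE.
by apply/induced_connectedP => x y /S_f -> /S_f ->; apply: connect0.
Qed.

End SplitIncidence.

Theorem mainTheorem6 (V : finType) (E : {set {set V}}) (hE : set0 \notin E) :
  threshold_hypergraph E <-> connected_domishold (@si_adj V E).
Proof.
split.
- case/threshold_transversal => // w [t [w_ge0 Hw]].
  have [E_triv | /subsetPn[e1 e1E]] := boolP (E \subset [set setT]).
    by apply: connected_domishold_nonempty => S; apply: si_cds_trivial.
  rewrite in_set1 => e1_neq_T.
  have /subsetPn[v1 _ v1e1] : ~~ (setT \subset e1) by rewrite subTset.
  have E_neq0 : E != set0 by apply/set0Pn; exists e1.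
  have t_gt0 : 0 < t.
    apply: Rnot_le_lt => t_le0; move/negP: (transversal_set0 E_neq0); apply.
    by apply/Hw; rewrite wsum_set0.
  exists (fun x => if x is inl v then w v else 0), t.
  split=> [[v|f] | ]; [exact: w_ge0 | exact: Rle_refl | split=> [|S]; first lra].
  by rewrite (si_cds_proper S e1E v1e1) -Hw wsum_inl_part.
- case=> w [t [w_ge0 [_ Hw]]]; apply/(threshold_transversal hE).
  have [E0 | E_neq0] := eqVneq E set0.
    exists (fun=> 0), 0; split=> [_|A]; first lra.
    split=> _; last by apply: wsum_ge0 => _; lra.
    by apply/transversalP => e; rewrite E0 inE.
  exists (w \o inl), t; split=> [v|A]; first exact: w_ge0.
  by rewrite -wsum_inl Hw si_cds_inl.
Qed.
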